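(* Let $\gamma\in\mathcal S_n$. Then $(\varepsilon,\varepsilon,\gamma;(12))\in\mathrm{Par}(n)$ if and only if the cycle structure of $\gamma$ is $2^r\cdot1^f$ for some integers $r\ge0$ and $f\ge1$; that is, $\gamma^2=\varepsilon$ and $\gamma$ has at least one fixed point.
   Context: A Latin square of order $n$ is an $n\times n$ array with rows, columns and symbols indexed by $[n]$, each symbol occurring once in each row and each column, with triple set $O(L)$. Permutations act on the right; $\varepsilon$ is the identity. A paratopism $(\alpha,\beta,\gamma;(12))$ maps $L$ to $L^\sigma$ with triple set $\{(y\beta,x\alpha,z\gamma):(x,y,z)\in O(L)\}$; it is an autoparatopism of $L$ if $L^\sigma=L$. $\mathrm{Par}(n)$ is the set of paratopisms that are autoparatopisms of at least one Latin square of order $n$. Cycle structure $c_1^{\lambda_1}\cdot c_2^{\lambda_2}\cdots$ means $\lambda_i$ cycles of length $c_i$, with fixed points counted as $1$-cycles. *)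

From mathcomp Require Import all_boot all_fingroup.
Set Implicit Arguments. Unset Strict Implicit. Unset Printing Implicit Defensive.

Definition lsquare (n : nat) := {ffun 'I_n * 'I_n -> 'I_n}.

(* Each symbol occurs once in each row and each column (on a finite type,
   injectivity of each row/column map is equivalent to bijectivity). *)
Definition is_latin (n : nat) (L : lsquare n) : Prop :=
  (forall x : 'I_n, injective (fun y => L (x, y))) /\
  (forall y : 'I_n, injective (fun x => L (x, y))).

Definition triples (n : nat) (L : lsquare n) : {set 'I_n * 'I_n * 'I_n} :=
  [set t | L (t.1.1, t.1.2) == t.2].

Definition par12_image (n : nat) (alpha beta gamma : {perm 'I_n}) (L : lsquare n)
  : {set 'I_n * 'I_n * 'I_n} :=
  [set (beta t.1.2, alpha t.1.1, gamma t.2) | t in triples L].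

Definition is_autopar12 (n : nat) (alpha beta gamma : {perm 'I_n}) (L : lsquare n)
  : Prop := par12_image alpha beta gamma L = triples L.

Definition in_Par12 (n : nat) (alpha beta gamma : {perm 'I_n}) : Prop :=
  exists L : lsquare n, is_latin L /\ is_autopar12 alpha beta gamma L.

From mathcomp Require Import all_boot all_fingroup ssralg zmodp zify.
Set Implicit Arguments. Unset Strict Implicit. Unset Printing Implicit Defensive.

(* Reading L y x = gamma (L x y) twice along one row shows that gamma is an
   involution, and on the diagonal it makes every L x x a fixed point.
   Conversely, an involution is determined up to relabelling by its numbers
   f of fixed points and p of 2-cycles, so one twisted square for each f >= 1
   and p suffices.  These are prolongations of cyclic squares of odd order:
   of y - x (twisted by negation) by anti-diagonals carrying fixed symbols
   when f <= 2p + 2, and otherwise of x + y by the diagonals y - x = d,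
   |d| <= p, carrying symbols paired by d <-> -d, the parity of f deciding
   whether the main diagonal d = 0 is among them. *)

(* For a permutation g these are exactly the Latin squares with
   autoparatopism (1, 1, g; (12)): columns are then injective as well. *)
Definition twisted_latin (T S : Type) (g : S -> S) (L : T -> T -> S) : Prop :=
  (forall x, injective (L x)) /\ (forall x y, L y x = g (L x y)).

Lemma twisted_latin_relabel (T T' S S' : Type) (g : S -> S) (g' : S' -> S')
    (L : T -> T -> S) (phi : T' -> T) (c : S -> S') :
  injective phi -> injective c -> (forall s, c (g s) = g' (c s)) ->
  twisted_latin g L -> twisted_latin g' (fun x y => c (L (phi x) (phi y))).
Proof.
move=> phiI cI cg [Lr Lt]; split=> [x y1 y2 /cI /Lr /phiI //|x y].
by rewrite Lt cg.
Qed.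

Lemma twisted_latin_involutive (T : finType) (g : T -> T) (L : T -> T -> T) (x0 : T) :
  twisted_latin g L -> involutive g.
Proof.
move=> [Lr Lt] z; have /codomP [y ->] := injF_onto (Lr x0) z.
by rewrite -!Lt.
Qed.

Lemma is_autopar12_11P n (g : {perm 'I_n}) (L : lsquare n) :
  is_autopar12 1%g 1%g g L <-> forall x y, L (y, x) = g (L (x, y)).
Proof.
split=> [autL x y|twL].
  have: ((y, x), g (L (x, y))) \in par12_image 1%g 1%g g L.
    by apply/imsetP; exists ((x, y), L (x, y)); rewrite ?inE ?perm1.
  by rewrite autL inE /= => /eqP.
apply/setP=> [[[x y] z]]; rewrite inE /=; apply/imsetP/eqP.
  case=> [[[x' y'] z']]; rewrite inE /= => /eqP <- [-> -> ->].
  by rewrite !perm1 twL.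
move=> <-; exists ((y, x), L (y, x)); first by rewrite inE.
by rewrite !perm1 /= twL.
Qed.

Lemma in_Par12_11P n (g : {perm 'I_n}) :
  in_Par12 1%g 1%g g <-> exists L : 'I_n -> 'I_n -> 'I_n, twisted_latin g L.
Proof.
split=> [[L [[Lr _] /is_autopar12_11P twL]]|[L [Lr Lt]]].
  by exists (fun x y => L (x, y)).
exists [ffun xy => L xy.1 xy.2]; split; last first.
  by apply/is_autopar12_11P => x y; rewrite !ffunE Lt.
split=> [x y1 y2|y x1 x2]; rewrite !ffunE /=; first exact: Lr.
by rewrite (Lt y x1) (Lt y x2) => /perm_inj /Lr.
Qed.

(** * Involutions up to relabelling *)

Definition fixpts (S : finType) (g : S -> S) := [set s | g s == s].
Definition cycle2_reps (S : finType) (g : S -> S) :=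
  [set s | enum_rank s < enum_rank (g s)].

Notation inv_model f p := ('I_f + 'I_p * bool)%type.

Definition model_swap f p (u : inv_model f p) : inv_model f p :=
  if u is inr (j, b) then inr (j, ~~ b) else u.

Lemma card_inv_model f p : #|{: inv_model f p}| = f + 2 * p.
Proof. by rewrite card_sum card_prod card_bool !card_ord mulnC. Qed.

Section InvolutionModel.

Variables (S : finType) (g : S -> S).
Hypothesis gK : involutive g.
Local Notation F := (fixpts g).
Local Notation P := (cycle2_reps g).

Lemma fixpts_notin_reps s : s \in F -> s \notin P.
Proof. by rewrite !inE => /eqP ->; rewrite ltnn. Qed.

Lemma reps_image_notin s : s \in P -> (g s \notin F) && (g s \notin P).
Proof.
rewrite !inE gK => lt_s; rewrite -leqNgt ltnW // andbT.
by apply: contraTN lt_s => /eqP <-; rewrite ltnn.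
Qed.

Lemma involution_trichotomy s : [\/ s \in F, s \in P | g s \in P].
Proof.
rewrite !inE gK; case: ltngtP => [_|_|/ord_inj/enum_rank_inj <-].
- by constructor 2.
- by constructor 3.
- by constructor 1.
Qed.

Definition model_embed (u : inv_model #|F| #|P|) : S :=
  match u with
  | inl i => enum_val i
  | inr (j, b) => if b then g (enum_val j) else enum_val j
  end.

Lemma model_embedE u : model_embed (model_swap u) = g (model_embed u).
Proof.
case: u => [i|[j []]] //=.
by have := enum_valP i; rewrite inE => /eqP ->.
Qed.

Lemma model_embed_class u :
  (model_embed u \in F, model_embed u \in P) =
  if u is inr (_, b) then (false, ~~ b) else (true, false).
Proof.
case: u => [i|[j b]] /=.
  by rewrite enum_valP (negPf (fixpts_notin_reps (enum_valP i))).
have jP := enum_valP j; have /andP [/negPf gjF /negPf gjP] := reps_image_notin jP.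
by case: b; rewrite ?gjF ?gjP // jP (negPf (contraL (@fixpts_notin_reps _) jP)).
Qed.

Lemma model_embed_inj : injective model_embed.
Proof.
move=> u1 u2 E; have := model_embed_class u1; rewrite E model_embed_class.
case: u1 u2 E => [i1|[j1 b1]] [i2|[j2 b2]] //= E; first by rewrite (enum_val_inj E).
case=> /negb_inj eb; subst b2; congr (inr (_, _)).
by case: b1 E => [/(can_inj gK)|] /enum_val_inj.
Qed.

Lemma model_embed_surj s : exists u, model_embed u = s.
Proof.
case: (involution_trichotomy s) => sP.
- by exists (inl (enum_rank_in sP s)); rewrite /= enum_rankK_in.
- by exists (inr (enum_rank_in sP s, false)); rewrite /= enum_rankK_in.
- by exists (inr (enum_rank_in sP (g s), true)); rewrite /= enum_rankK_in ?gK.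
Qed.

Lemma model_embed_bij : bijective model_embed.
Proof.
apply: inj_card_bij model_embed_inj _.
rewrite -(card_codom model_embed_inj); apply/subset_leq_card/subsetP=> s _.
by have [u <-] := model_embed_surj s; apply: codom_f.
Qed.

Lemma card_involution : #|S| = #|F| + 2 * #|P|.
Proof. by rewrite -(bij_eq_card model_embed_bij) card_inv_model. Qed.

End InvolutionModel.

Arguments model_embed {S} g.

Lemma involution_model (S : finType) (g : S -> S) f p :
  involutive g -> #|fixpts g| = f -> #|S| = f + 2 * p ->
  exists e : inv_model f p -> S, bijective e /\ forall u, e (model_swap u) = g (e u).
Proof.
move=> gK <-; rewrite (card_involution gK) => /eqP; rewrite eqn_add2l eqn_mul2l /=.
move=> /eqP <-; exists (model_embed g).
by split; [apply: model_embed_bij | apply: model_embedE].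
Qed.

Lemma twisted_latin_model (T S : finType) (g : S -> S) (L : T -> T -> S) f p :
  twisted_latin g L -> involutive g ->
  #|fixpts g| = f -> #|S| = f + 2 * p -> #|T| = f + 2 * p ->
  exists (T' : finType) (L' : T' -> T' -> inv_model f p),
    #|T'| = f + 2 * p /\ twisted_latin (@model_swap f p) L'.
Proof.
move=> twL gK gF cardS cardT; have [e [[c eK cK] eg]] := involution_model gK gF cardS.
exists T, (fun x y => c (L x y)); split=> //.
apply: (twisted_latin_relabel (phi := id)) twL => [||s]; [exact: inj_id | exact: can_inj cK |].
by apply: (can_inj eK); rewrite eg !cK.
Qed.

(** * Twisted squares over cyclic groups of odd order *)

Lemma widen_ord_inj n m (le_nm : n <= m) : injective (widen_ord le_nm).
Proof. by move=> i j /(congr1 val) /= /val_inj. Qed.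

Definition addmod b (c c' : 'I_b) : 'I_b :=
  Ordinal (ltn_pmod (c + c') (leq_ltn_trans (leq0n c) (ltn_ord c))).

Lemma addmodC b (c c' : 'I_b) : addmod c c' = addmod c' c.
Proof. by apply: val_inj; rewrite /= addnC. Qed.

Lemma addmod_inj b (c : 'I_b) : injective (addmod c).
Proof.
move=> c1 c2 /(congr1 val) /= /eqP; rewrite eqn_modDl !modn_small //.
by move=> /eqP /val_inj.
Qed.

Import GRing.Theory.
Local Open Scope ring_scope.

Lemma eq_subr_of_add (V : zmodType) (x y d : V) : x + y = x + x + d -> d == y - x.
Proof. by move=> e; rewrite eq_sym subr_eq -(inj_eq (addrI x)) e [d + x]addrC addrA. Qed.

Section OddCyclic.

Variable k : nat.
Local Notation Zm := 'I_(k.*2).+1.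

Lemma double_inj (x y : Zm) : x + x = y + y -> x = y.
Proof.
have halfK (z : Zm) : (z + z) *+ k.+1 = z.
  apply: val_inj; rewrite Zp_mulrn /= modnMml.
  have dbl m : ((m + m) * k.+1 = m * (k.*2).+1 + m)%N by rewrite -muln2; nia.
  by rewrite dbl modnMDl modn_small.
by move=> e; rewrite -(halfK x) e halfK.
Qed.

Lemma eq_oppr_self (d : Zm) : (- d == d) = (d == 0).
Proof.
apply/eqP/eqP=> [e|->]; last by rewrite oppr0.
by apply: double_inj; rewrite addr0 -{1}e addNr.
Qed.

End OddCyclic.

Lemma val_Zp_opp k (d : 'I_k.+1) : nat_of_ord (- d) = ((k.+1 - d) %% k.+1)%N.
Proof. by []. Qed.

Section CenteredEmbedding.

Variables k r : nat.
Hypothesis le_rk : (r <= k)%N.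

(* Represent Z_{2r+1} by the residues -r..r and read them in Z_{2k+1}. *)
Definition centered (d : 'I_(r.*2).+1) : 'I_(k.*2).+1 :=
  if (d <= r)%N then inord d else - inord ((r.*2).+1 - d).

Lemma val_centered d : nat_of_ord (centered d) =
  if (d <= r)%N then nat_of_ord d else ((k.*2).+1 - ((r.*2).+1 - d))%N.
Proof.
rewrite /centered; case: ifP => hd; first by rewrite inordK //; lia.
have := ltn_ord d; rewrite val_Zp_opp inordK; last by lia.
by move=> ltd; rewrite modn_small //; lia.
Qed.

Lemma centered_inj : injective centered.
Proof.
move=> d1 d2 /(congr1 (@nat_of_ord _)); rewrite !val_centered.
have := ltn_ord d1; have := ltn_ord d2.
by case: ifP => h1; case: ifP => h2 => l2 l1 e; apply: ord_inj; lia.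
Qed.

Lemma centeredN d : centered (- d) = - centered d.
Proof.
apply: ord_inj; rewrite val_Zp_opp !val_centered val_Zp_opp.
have := ltn_ord d; case: (posnP d) => [->|dp] ld; first by rewrite subn0 !modnn.
rewrite (modn_small (m := ((r.*2).+1 - d)%N)); last by lia.
by case: ifP => h1; case: ifP => h2; rewrite ?modn_small; lia.
Qed.

End CenteredEmbedding.

Section FewFixedPoints.

Variables r b : nat.
Hypothesis le_b : (b <= (r.*2).+1)%N.
Local Notation Zm := 'I_(r.*2).+1.
Local Notation wid := (widen_ord le_b).

Definition few_inv (s : Zm + 'I_b) : Zm + 'I_b := if s is inl d then inl (- d) else s.

(* The square y - x on Z_{2r+1}, twisted by negation, in which the b
   anti-diagonals x + y = c, which are symmetric transversals, are handed to
   new fixed symbols c. *)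
Definition few_sq (s t : Zm + 'I_b) : Zm + 'I_b :=
  match s, t with
  | inl x, inl y => if [pick c | wid c == x + y] is Some c then inr c else inl (y - x)
  | inl x, inr c => inl (wid c - (x + x))
  | inr c, inl y => inl (y + y - wid c)
  | inr c, inr c' => inr (addmod c c')
  end.

Lemma few_invK : involutive few_inv.
Proof. by case=> [d|c] //=; rewrite opprK. Qed.

Lemma few_sq_twisted : twisted_latin few_inv few_sq.
Proof.
split=> [[x|c] [y1|c1] [y2|c2] /=|[x|c] [y|c'] /=].
- case: pickP => [d1 /eqP h1|n1]; case: pickP => [d2 /eqP h2|n2] //=.
  + by move=> E; move: h1; rewrite (inr_inj E) h2 => /(addrI _) ->.
  + by move=> E; rewrite (addIr _ (inl_inj E)).
- case: pickP => [d1 _|n1] //= E; have e := inl_inj E.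
  have : wid c2 == x + y1 by rewrite -(subrK (x + x) (wid c2)) -e addrA subrK addrC.
  by rewrite n1.
- case: pickP => [d2 _|n2] //= E; have e := inl_inj E.
  have : wid c1 == x + y2 by rewrite -(subrK (x + x) (wid c1)) e addrA subrK addrC.
  by rewrite n2.
- by move=> E; rewrite (widen_ord_inj (addIr _ (inl_inj E))).
- by move=> E; rewrite (double_inj (addIr _ (inl_inj E))).
- by [].
- by [].
- by move=> E; rewrite (addmod_inj (inr_inj E)).
- case: pickP => [c1 /eqP h1|n1]; case: pickP => [c2 /eqP h2|n2] //=.
  + by rewrite (widen_ord_inj (etrans h1 (etrans (addrC y x) (esym h2)))).
  + by have := n2 c1; rewrite h1 addrC eqxx.
  + by have := n1 c2; rewrite h2 addrC eqxx.
  + by rewrite opprB.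
- by rewrite opprB.
- by rewrite opprB.
- by rewrite addmodC.
Qed.

Lemma card_fixpts_few_inv : #|fixpts few_inv| = b.+1.
Proof.
have -> : fixpts few_inv = (inl 0 : Zm + 'I_b) |: (inr @: [set: 'I_b]).
  apply/setP=> [[d|c]]; rewrite !inE /=; last first.
    by rewrite eqxx; apply/esym/imset_f; rewrite inE.
  have /negbTE -> : inl d \notin inr @: [set: 'I_b] by apply/imsetP=> [[]].
  by rewrite orbF !(inj_eq inl_inj) eq_oppr_self.
rewrite cardsU1 card_imset ?cardsT ?card_ord; last exact: inr_inj.
by have /negbTE -> : (inl 0 : Zm + 'I_b) \notin inr @: [set: _] by apply/imsetP=> [[]].
Qed.

End FewFixedPoints.

Section EvenFixedPoints.

Variables k r : nat.
Hypothesis le_rk : (r <= k)%N.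
Local Notation Zk := 'I_(k.*2).+1.
Local Notation Zr := 'I_(r.*2).+1.
Local Notation sym := (Zk + Zr)%type.
Local Notation ctr := (centered k).

Definition even_inv (s : sym) : sym := if s is inr d then inr (- d) else s.

(* The symmetric square x + y on Z_{2k+1}, in which the 2r+1 diagonals
   y - x = d with d in -r..r are handed to new symbols d, paired by negation. *)
Definition even_sq (s t : sym) : sym :=
  match s, t with
  | inl x, inl y => if [pick d | ctr d == y - x] is Some d then inr d else inl (x + y)
  | inl x, inr d => inl (x + x + ctr d)
  | inr d, inl y => inl (y + y + ctr d)
  | inr d, inr d' => inr (d' - d)
  end.

Lemma even_invK : involutive even_inv.
Proof. by case=> [x|d] //=; rewrite opprK. Qed.

Lemma even_sq_twisted : twisted_latin even_inv even_sq.
Proof.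
split=> [[x|c] [y1|c1] [y2|c2] /=|[x|c] [y|c'] //=].
- case: pickP => [d1 /eqP h1|n1]; case: pickP => [d2 /eqP h2|n2] //=.
  + by move=> E; move: h1; rewrite (inr_inj E) h2 => /(addIr _) ->.
  + by move=> E; rewrite (addrI _ (inl_inj E)).
- case: pickP => [d1 _|n1] //= E.
  by have := n1 c2; rewrite (eq_subr_of_add (inl_inj E)).
- case: pickP => [d2 _|n2] //= E.
  by have := n2 c1; rewrite (eq_subr_of_add (esym (inl_inj E))).
- by move=> E; rewrite (centered_inj le_rk (addrI _ (inl_inj E))).
- by move=> E; rewrite (double_inj (addIr _ (inl_inj E))).
- by [].
- by [].
- by move=> E; rewrite (addIr _ (inr_inj E)).
- case: pickP => [c1 /eqP h1|n1]; case: pickP => [c2 /eqP h2|n2] //=.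
  + by congr inr; apply: (centered_inj le_rk); rewrite centeredN // h1 h2 opprB.
  + by have := n2 (- c1); rewrite centeredN // h1 opprB eqxx.
  + by have := n1 (- c2); rewrite centeredN // h2 opprB eqxx.
  + by rewrite addrC.
- by rewrite opprB.
Qed.

Lemma card_fixpts_even_inv : #|fixpts even_inv| = (k.*2).+2.
Proof.
have -> : fixpts even_inv = (inr 0 : sym) |: (inl @: [set: Zk]).
  apply/setP=> [[x|d]]; rewrite !inE /=.
    by rewrite eqxx; apply/esym/imset_f; rewrite inE.
  have /negbTE -> : inr d \notin inl @: [set: Zk] by apply/imsetP=> [[]].
  by rewrite orbF !(inj_eq inr_inj) eq_oppr_self.
rewrite cardsU1 card_imset ?cardsT ?card_ord; last exact: inl_inj.
by have /negbTE -> : (inr 0 : sym) \notin inl @: [set: _] by apply/imsetP=> [[]].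
Qed.

End EvenFixedPoints.

Section OddFixedPoints.

Variables k r : nat.
Hypothesis le_rk : (r <= k)%N.
Local Notation Zk := 'I_(k.*2).+1.
Local Notation D := {d : 'I_(r.*2).+1 | d != 0}.
Local Notation sym := (Zk + D)%type.
Local Notation ctr d := (centered k (val d)).

Lemma oppD_subproof (d : D) : - val d != 0.
Proof. by rewrite oppr_eq0 (valP d). Qed.
Definition oppD (d : D) : D := exist _ (- val d) (oppD_subproof d).

Lemma oppDK : involutive oppD.
Proof. by move=> d; apply: val_inj; rewrite /= opprK. Qed.

Lemma ctr_inj : injective (fun d : D => ctr d).
Proof. by move=> d1 d2 /(centered_inj le_rk) /val_inj. Qed.

Definition odd_inv (s : sym) : sym := if s is inr d then inr (oppD d) else s.

(* As even_sq, but only the 2r diagonals with d != 0 are handed to new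
   symbols.  The new diagonal cells (inr d, inr d) then carry the fixed
   symbol 0, which trades places with d on the anti-diagonal x + y = 0. *)
Definition odd_sq (s t : sym) : sym :=
  match s, t with
  | inl x, inl y => if [pick d : D | ctr d == y - x] is Some d then
                      if x + y == 0 then inl 0 else inr d
                    else inl (x + y)
  | inl x, inr d => if x + x + ctr d == 0 then inr d else inl (x + x + ctr d)
  | inr d, inl y => if y + y + ctr d == 0 then inr (oppD d) else inl (y + y + ctr d)
  | inr d, inr d' => if insub (val d' - val d) is Some e then inr e else inl 0
  end.

Lemma odd_invK : involutive odd_inv.
Proof. by case=> [x|d] //=; rewrite oppDK. Qed.

Lemma odd_sq_twist x y : odd_sq y x = odd_inv (odd_sq x y).
Proof.
case: x y => [x|c] [y|c'] /=.
- case: pickP => [c1 /eqP h1|n1]; case: pickP => [c2 /eqP h2|n2] /=.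
  + rewrite addrC; case: ifP => //= _; congr inr; apply: ctr_inj.
    by rewrite /= centeredN // h1 h2 opprB.
  + by have := n2 (oppD c1); rewrite /= centeredN // h1 opprB eqxx.
  + by have := n1 (oppD c2); rewrite /= centeredN // h2 opprB eqxx.
  + by rewrite addrC.
- by case: ifP.
- by case: ifP => //=; rewrite oppDK.
- case: insubP => [e1 ne1 he1|z1]; case: insubP => [e2 ne2 he2|z2] //=.
  + by congr inr; apply: val_inj; rewrite /= he1 he2 opprB.
  + by move: z2; rewrite -oppr_eq0 opprB ne1.
  + by move: z1; rewrite -oppr_eq0 opprB ne2.
Qed.

Lemma odd_sq_inl_neq x y c : odd_sq (inl x) (inl y) != odd_sq (inl x) (inr c).
Proof.
rewrite /=; apply/negP => /eqP.
case: pickP => [d1 /eqP h1|n1]; [case: ifP => /eqP hz|];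
  case: ifP => /eqP hs E //.
- by apply: hs; rewrite (inl_inj E).
- apply: hz; rewrite (inr_inj E) in h1.
  by rewrite -hs h1 -addrA [_ + (_ - _)]addrC subrK.
- by have := n1 c; rewrite (eq_subr_of_add (inl_inj E)).
Qed.

Lemma odd_sq_inr_neq c y c' : odd_sq (inr c) (inl y) != odd_sq (inr c) (inr c').
Proof.
rewrite /=; case: ifP => /eqP hz; case: insubP => [e _ he|_] //=; apply/negP => /eqP E.
- have : val c' == 0 by rewrite -(subrK (val c) (val c')) -he -(inr_inj E) /= addNr.
  by rewrite (negPf (valP c')).
- by apply: hz; rewrite (inl_inj E).
Qed.

Lemma odd_sq_row x : injective (odd_sq x).
Proof.
case: x => [x|c] [y1|c1] [y2|c2].
- rewrite /=.
  case: pickP => [d1 /eqP h1|n1]; [case: ifP => /eqP s1|];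
  case: pickP => [d2 /eqP h2|n2]; try case: ifP => /eqP s2; move=> E //;
  first [ by rewrite (addrI x (etrans s1 (esym s2)))
        | by rewrite (inr_inj E) h2 in h1; rewrite (addIr _ h1)
        | by rewrite (addrI x (etrans s1 (inl_inj E)))
        | by rewrite (addrI x (etrans (inl_inj E) (esym s2)))
        | by rewrite (addrI x (inl_inj E)) ].
- by move=> E; move: (odd_sq_inl_neq x y1 c2); rewrite E eqxx.
- by move=> E; move: (odd_sq_inl_neq x y2 c1); rewrite E eqxx.
- rewrite /=; case: ifP => /eqP s1; case: ifP => /eqP s2 E //;
  first [ by rewrite (inr_inj E) | by rewrite (ctr_inj (addrI _ (inl_inj E))) ].
- rewrite /=; case: ifP => /eqP s1; case: ifP => /eqP s2 E //;
  first [ by rewrite (double_inj (addIr _ (etrans s1 (esym s2))))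
        | by rewrite (double_inj (addIr _ (inl_inj E))) ].
- by move=> E; move: (odd_sq_inr_neq c y1 c2); rewrite E eqxx.
- by move=> E; move: (odd_sq_inr_neq c y2 c1); rewrite E eqxx.
- rewrite /=; case: insubP => [e1 ne1 he1|z1]; case: insubP => [e2 ne2 he2|z2] E //.
  + have H := congr1 val (inr_inj E); rewrite he1 he2 in H.
    by rewrite (val_inj (addIr _ H)).
  + move: z1 z2; rewrite !negbK !subr_eq0 => /eqP e1 /eqP e2.
    by congr inr; apply: val_inj => /=; rewrite e1 e2.
Qed.

Lemma odd_sq_twisted : twisted_latin odd_inv odd_sq.
Proof. by split; [apply: odd_sq_row | apply: odd_sq_twist]. Qed.

Lemma card_fixpts_odd_inv : #|fixpts odd_inv| = (k.*2).+1.
Proof.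
have -> : fixpts odd_inv = inl @: [set: Zk].
  apply/setP=> [[x|d]]; rewrite !inE /=.
    by rewrite eqxx; apply/esym/imset_f; rewrite inE.
  have /negbTE -> : inr d \notin inl @: [set: Zk] by apply/imsetP=> [[]].
  rewrite (inj_eq inr_inj); apply/negbTE/eqP => /(congr1 val) /= /eqP.
  by rewrite eq_oppr_self (negPf (valP d)).
by rewrite card_imset ?cardsT ?card_ord //; exact: inl_inj.
Qed.

Lemma card_odd_sym : #|{: sym}| = ((k.*2).+1 + r.*2)%N.
Proof.
rewrite card_sum card_ord card_sig.
have -> : #|[pred d : 'I_(r.*2).+1 | d != 0]| = #|predC1 (0 : 'I_(r.*2).+1)|.
  by apply: eq_card => d; rewrite !inE.
by rewrite cardC1 card_ord.
Qed.

End OddFixedPoints.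

Local Close Scope ring_scope.

Lemma twisted_latin_exists f p : 0 < f ->
  exists (T : finType) (L : T -> T -> inv_model f p),
    #|T| = f + 2 * p /\ twisted_latin (@model_swap f p) L.
Proof.
move=> f_gt0; case: (leqP f (p.*2).+2) => hf.
  have le_b : f.-1 <= (p.*2).+1 by lia.
  apply: twisted_latin_model (few_sq_twisted le_b) (@few_invK _ _) _ _ _;
    rewrite ?card_fixpts_few_inv ?card_sum ?card_ord; lia.
have [k [fE|fE]] : exists k, f = (k.*2).+1 \/ f = (k.*2).+2.
  have := odd_double_half f; case: (odd f) => /= fE.
    by exists f./2; left.
  by exists f./2.-1; right; lia.
- have le_pk : p <= k by lia.
  apply: twisted_latin_model (odd_sq_twisted le_pk) (@odd_invK _ _) _ _ _;
    rewrite ?card_fixpts_odd_inv ?card_odd_sym; lia.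
- have le_pk : p <= k by lia.
  apply: twisted_latin_model (even_sq_twisted le_pk) (@even_invK _ _) _ _ _;
    rewrite ?card_fixpts_even_inv ?card_sum ?card_ord; lia.
Qed.

Theorem theorem4p7 (n : nat) (hn : 0 < n) (gamma : {perm 'I_n}) :
  in_Par12 1%g 1%g gamma <->
  ((gamma * gamma)%g = 1%g /\ exists x : 'I_n, gamma x = x).
Proof.
rewrite in_Par12_11P; split=> [[L twL]|[gg [x gx]]].
  have gK := twisted_latin_involutive (Ordinal hn) twL.
  split; last by exists (L (Ordinal hn) (Ordinal hn)); rewrite -twL.2.
  by apply/permP=> z; rewrite permM perm1 gK.
have gK : involutive gamma by move=> z; rewrite -permM gg perm1.
have f_gt0 : 0 < #|fixpts gamma| by apply/card_gt0P; exists x; rewrite inE gx.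
have [T [L [cardT twL]]] := twisted_latin_exists #|cycle2_reps gamma| f_gt0.
have {cardT} cardT : #|T| = n by rewrite cardT -(card_involution gK) card_ord.
pose phi (i : 'I_n) : T := enum_val (cast_ord (esym cardT) i).
have phi_inj : injective phi by move=> i j /enum_val_inj /cast_ord_inj.
exists (fun i j => model_embed gamma (L (phi i) (phi j))).
exact: twisted_latin_relabel phi_inj (model_embed_inj gK) (model_embedE gK) twL.
Qed.
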